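(* Let $U=\{1,\dots,N\}$ be a finite population with a randomized design and exposure mapping as described in the context, and fix two exposures $d_k,d_l\in\Delta$. Define $$\widehat{\mathrm{Cov}}_A[\widehat{y^T_{HT}}(d_k),\widehat{y^T_{HT}}(d_l)] = \sum_{i\in U}\ \sum_{j\in U\setminus\{i\}:\ \pi_{ij}(d_k,d_l)>0} \frac{\mathbf{I}(D_i=d_k)\mathbf{I}(D_j=d_l)}{\pi_{ij}(d_k,d_l)}\,\frac{y_i(d_k)}{\pi_i(d_k)}\,\frac{y_j(d_l)}{\pi_j(d_l)}\,\big[\pi_{ij}(d_k,d_l)-\pi_i(d_k)\pi_j(d_l)\big]$$ $$\qquad - \sum_{i\in U}\ \sum_{j\in U:\ \pi_{ij}(d_k,d_l)=0}\left[\frac{\mathbf{I}(D_i=d_k)\,y_i(d_k)^2}{2\pi_i(d_k)}+\frac{\mathbf{I}(D_j=d_l)\,y_j(d_l)^2}{2\pi_j(d_l)}\right],$$ where $\pi_{ii}(d_k,d_l)=0$ for $k\neq l$ (so $j=i$ is included in the second sum). Then, for $k\neq l$, $$\mathrm{E}\big[\widehat{\mathrm{Cov}}_A[\widehat{y^T_{HT}}(d_k),\widehat{y^T_{HT}}(d_l)]\big]\le \mathrm{Cov}\big[\widehat{y^T_{HT}}(d_k),\widehat{y^T_{HT}}(d_l)\big],$$ where $\widehat{y^T_{HT}}(d)=\sum_{i=1}^N \mathbf{I}(D_i=d)\,y_i(d)/\pi_i(d)$ and expectations/covariances are over the randomization distribution of $\mathbf{Z}$.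
   Context: A finite population $U$ of units $i=1,\dots,N$. A random treatment assignment vector $\mathbf{Z}=(Z_1,\dots,Z_N)'$ takes values in $\Omega=\{\mathbf{z}\in\{1,\dots,M\}^N: p_{\mathbf{z}}>0\}$ with known probabilities $\Pr(\mathbf{Z}=\mathbf{z})=p_{\mathbf{z}}$. An exposure mapping $f:\Omega\times\Theta\to\Delta$, with $\Delta=\{d_1,\dots,d_K\}$ finite and unit traits $\theta_i\in\Theta$, gives unit $i$'s exposure $D_i=f(\mathbf{Z},\theta_i)$. Write $\pi_i(d)=\Pr(D_i=d)$, $\pi_{ij}(d,d')=\Pr(D_i=d,D_j=d')$ and $\pi_{ij}(d)=\pi_{ij}(d,d)$; it is assumed $0<\pi_i(d_k)<1$ for all $i,k$. Each unit has fixed (non-random) potential outcomes $y_i(d_1),\dots,y_i(d_K)$, and the observed outcome of unit $i$ is $y_i(D_i)$, so only quantities multiplied by $\mathbf{I}(D_i=d)$ for the realized $d$ are observed. *)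

From HB Require Import structures.
From mathcomp Require Import all_boot all_order all_algebra.
Set Implicit Arguments. Unset Strict Implicit. Unset Printing Implicit Defensive.
Import Order.TTheory GRing.Theory Num.Theory.
Local Open Scope ring_scope.

Section Design.
Variables (R : realFieldType) (N M : nat) (Theta : Type) (Delta : finType).

(* treatment assignment vectors z in {1..M}^N (values coded as 'I_M) *)
Definition assignment := {ffun 'I_N -> 'I_M}.

Variables (p : assignment -> R)
          (f : assignment -> Theta -> Delta)
          (theta : 'I_N -> Theta)
          (y : 'I_N -> Delta -> R).

Definition design_prob := (forall z, 0 <= p z) /\ \sum_(z : assignment) p z = 1.

Definition expo (i : 'I_N) (z : assignment) : Delta := f z (theta i).

Definition ind (i : 'I_N) (d : Delta) (z : assignment) : R := (expo i z == d)%:R.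

Definition Expect (X : assignment -> R) : R := \sum_(z : assignment) p z * X z.

Definition Covar (X Y : assignment -> R) : R :=
  Expect (fun z => X z * Y z) - Expect X * Expect Y.

Definition pi1 (i : 'I_N) (d : Delta) : R := Expect (ind i d).

Definition pi2 (i j : 'I_N) (d d' : Delta) : R :=
  Expect (fun z => ind i d z * ind j d' z).

Definition yHT (d : Delta) (z : assignment) : R :=
  \sum_(i < N) ind i d z * y i d / pi1 i d.

Definition CovA_hat (dk dl : Delta) (z : assignment) : R :=
  \sum_(i < N) \sum_(j < N | (j != i) && (0 < pi2 i j dk dl))
     (ind i dk z * ind j dl z / pi2 i j dk dl) * (y i dk / pi1 i dk) *
     (y j dl / pi1 j dl) * (pi2 i j dk dl - pi1 i dk * pi1 j dl)
  - \sum_(i < N) \sum_(j < N | pi2 i j dk dl == 0)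
     (ind i dk z * (y i dk) ^+ 2 / (2 * pi1 i dk) +
      ind j dl z * (y j dl) ^+ 2 / (2 * pi1 j dl)).

End Design.

From Pilot Require Import Defs.
From HB Require Import structures.
From mathcomp Require Import all_boot all_order all_algebra.
From mathcomp Require Import ring.
Import Order.TTheory GRing.Theory Num.Theory.
Local Open Scope ring_scope.

(* Both sides expand over pairs (i, j) of units.  By Horvitz-Thompson
   weighting, the first sum of the estimator is unbiased for every covariance
   term with pi_ij > 0, and the second has expectation
   (y_i^2 + y_j^2) / 2 for every pair with pi_ij = 0, while the true covariance
   term of such a pair is -y_i y_j.  Since 2 y_i y_j <= y_i^2 + y_j^2, the
   estimator is conservative.  For k <> l the diagonal pairs have pi_ii = 0,
   so every pair is accounted for exactly once. *)

Lemma cross_term_ge_neg_mean_square (R : realFieldType) (a b u v : R) :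
  a != 0 -> b != 0 ->
  - (a * (u ^+ 2 / (2 * a)) + b * (v ^+ 2 / (2 * b))) <= (u / a) * (v / b) * (0 - a * b).
Proof.
move=> a_neq0 b_neq0.
have -> : (u / a) * (v / b) * (0 - a * b) = - (u * v) by field; rewrite a_neq0 b_neq0.
have -> : a * (u ^+ 2 / (2 * a)) + b * (v ^+ 2 / (2 * b)) = (u ^+ 2 + v ^+ 2) / 2
  by field; rewrite a_neq0 b_neq0.
by rewrite lerN2 leif_mean_square.
Qed.

Section Randomization.
Variables (R : realFieldType) (N M : nat) (Theta : Type) (Delta : finType).
Variables (p : assignment N M -> R) (f : assignment N M -> Theta -> Delta)
  (theta : 'I_N -> Theta) (y : 'I_N -> Delta -> R).

Local Notation E := (Expect p).
Local Notation I := (ind R f theta).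
Local Notation pi1 := (pi1 p f theta).
Local Notation pi2 := (pi2 p f theta).

Lemma eq_Expect (X Y : assignment N M -> R) : X =1 Y -> E X = E Y.
Proof. by move=> eqXY; apply: eq_bigr => z _; rewrite eqXY. Qed.

Lemma Expect_sum (J : Type) (r : seq J) (P : pred J)
    (F : J -> assignment N M -> R) :
  E (fun z => \sum_(j <- r | P j) F j z) = \sum_(j <- r | P j) E (F j).
Proof. rewrite /Expect; under eq_bigr do rewrite mulr_sumr; exact: exchange_big. Qed.

Lemma ExpectD (X Y : assignment N M -> R) :
  E (fun z => X z + Y z) = E X + E Y.
Proof. by rewrite /Expect -big_split; apply: eq_bigr => z _; rewrite mulrDr. Qed.

Lemma ExpectB (X Y : assignment N M -> R) :
  E (fun z => X z - Y z) = E X - E Y.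
Proof. by rewrite /Expect -sumrB; apply: eq_bigr => z _; rewrite mulrBr. Qed.

Lemma ExpectMr (X : assignment N M -> R) (c : R) :
  E (fun z => X z * c) = E X * c.
Proof. by rewrite /Expect mulr_suml; apply: eq_bigr => z _; rewrite mulrA. Qed.

Lemma pi2_ge0 i j d d' : design_prob p -> 0 <= pi2 i j d d'.
Proof.
case=> p_ge0 _; apply: sumr_ge0 => z _.
by rewrite mulr_ge0 // mulr_ge0 // ler0n.
Qed.

Lemma pi2_diag_neq i d d' : d != d' -> pi2 i i d d' = 0.
Proof.
move=> neq_dd'; apply: big1 => z _; rewrite /ind.
have [->|_] := eqVneq (expo f theta i z) d; last by rewrite mul0r mulr0.
by rewrite (negbTE neq_dd') mulr0 mulr0.
Qed.

Lemma Expect_yHT d : E (yHT p f theta y d) = \sum_(i < N) pi1 i d * (y i d / pi1 i d).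
Proof.
rewrite Expect_sum; apply: eq_bigr => i _.
by rewrite -ExpectMr; apply: eq_Expect => z; rewrite mulrA.
Qed.

Lemma Expect_mul_yHT d d' :
  E (fun z => yHT p f theta y d z * yHT p f theta y d' z) =
  \sum_(i < N) \sum_(j < N) pi2 i j d d' * ((y i d / pi1 i d) * (y j d' / pi1 j d')).
Proof.
under eq_Expect => z.
  rewrite /yHT mulr_suml; under eq_bigr => i _ do rewrite mulr_sumr.
  over.
rewrite Expect_sum; apply: eq_bigr => i _; rewrite Expect_sum; apply: eq_bigr => j _.
by rewrite -ExpectMr; apply: eq_Expect => z; ring.
Qed.

Lemma Covar_yHT d d' :
  Covar p (yHT p f theta y d) (yHT p f theta y d') =
  \sum_(i < N) \sum_(j < N)
    (y i d / pi1 i d) * (y j d' / pi1 j d') * (pi2 i j d d' - pi1 i d * pi1 j d').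
Proof.
rewrite /Covar Expect_mul_yHT !Expect_yHT mulr_suml -sumrB; apply: eq_bigr => i _.
by rewrite mulr_sumr -sumrB; apply: eq_bigr => j _; ring.
Qed.

Lemma Expect_ind2_div i j d d' (c : R) : pi2 i j d d' != 0 ->
  E (fun z => I i d z * I j d' z / pi2 i j d d' * c) = c.
Proof.
move=> pi2_neq0; under eq_Expect => z do rewrite mulrAC -mulrA.
by rewrite ExpectMr -/(Defs.pi2 _ _ _ _ _ _ _) mulrCA mulfV ?mulr1.
Qed.

Lemma Expect_sqr_correction i j d d' :
  E (fun z => I i d z * y i d ^+ 2 / (2 * pi1 i d) + I j d' z * y j d' ^+ 2 / (2 * pi1 j d')) =
  pi1 i d * (y i d ^+ 2 / (2 * pi1 i d)) + pi1 j d' * (y j d' ^+ 2 / (2 * pi1 j d')).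
Proof. by rewrite ExpectD -!ExpectMr; congr (_ + _); apply: eq_Expect => z; rewrite mulrA. Qed.

End Randomization.

Theorem mainTheorem1 (R : realFieldType) (N M : nat) (Theta : Type)
  (Delta : finType) (p : assignment N M -> R)
  (f : assignment N M -> Theta -> Delta) (theta : 'I_N -> Theta)
  (y : 'I_N -> Delta -> R) (dk dl : Delta) :
  design_prob p ->
  (forall (i : 'I_N) (d : Delta),
      0 < pi1 p f theta i d /\ pi1 p f theta i d < 1) ->
  dk != dl ->
  Expect p (CovA_hat p f theta y dk dl)
    <= Covar p (yHT p f theta y dk) (yHT p f theta y dl).
Proof.
move=> design pi1_in01 neq_kl.
have pi1_neq0 i d : pi1 p f theta i d != 0 by rewrite gt_eqF; case: (pi1_in01 i d).
rewrite Covar_yHT /CovA_hat ExpectB !Expect_sum -sumrB; apply: ler_sum => i _.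
have split_zero j : ~~ ((j != i) && (0 < pi2 p f theta i j dk dl)) =
                    (pi2 p f theta i j dk dl == 0).
  have [->|_] := eqVneq j i; first by rewrite pi2_diag_neq // eqxx.
  by rewrite lt_def pi2_ge0 // andbT negbK.
rewrite !Expect_sum [X in _ <= X](bigID (fun j => (j != i) && (0 < pi2 p f theta i j dk dl))).
rewrite [X in _ <= _ + X](eq_bigl _ _ split_zero) lerD //.
  apply: ler_sum => j /andP[_ /lt0r_neq0 pi2_neq0].
  by under eq_Expect do rewrite -2!mulrA; rewrite Expect_ind2_div // !mulrA.
rewrite -sumrN; apply: ler_sum => j /eqP pi2_eq0.
by rewrite Expect_sqr_correction pi2_eq0 cross_term_ge_neg_mean_square.
Qed.
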